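(* Let $v^1,\dots,v^k$ be a basis of $\mathfrak h^*$, $G^{ab}=(v^a|v^b)$, and $(G_{ab})$ the inverse matrix of $(G^{ab})$. For a real root $\alpha=\sum_a\alpha_av^a$ define, for $a,b,c,d\in\{1,\dots,k\}$, $$X(\alpha)_{ab\,cd}=\tfrac12\alpha_a\alpha_b\alpha_c\alpha_d-\alpha_{(a}G_{b)(c}\alpha_{d)}+\tfrac14G_{a(c}G_{d)b},$$ where $\alpha_{(a}G_{b)(c}\alpha_{d)}:=\frac14(\alpha_aG_{bc}\alpha_d+\alpha_bG_{ac}\alpha_d+\alpha_aG_{bd}\alpha_c+\alpha_bG_{ad}\alpha_c)$ and $G_{a(c}G_{d)b}:=\frac12(G_{ac}G_{db}+G_{ad}G_{cb})$. Then for all real roots $\alpha,\beta$ with $(\alpha|\beta)=0$, $$\sum_{e,f,g,h=1}^k\big(X(\alpha)_{ab\,ef}G^{eg}G^{fh}X(\beta)_{gh\,cd}-X(\beta)_{ab\,ef}G^{eg}G^{fh}X(\alpha)_{gh\,cd}\big)=0$$ for all $a,b,c,d$, and for all real roots $\alpha,\beta$ with $(\alpha|\beta)=\mp1$, $$\sum_{e,f,g,h=1}^k\big(X(\alpha)_{ab\,ef}G^{eg}G^{fh}X(\beta)_{gh\,cd}+X(\beta)_{ab\,ef}G^{eg}G^{fh}X(\alpha)_{gh\,cd}\big)=\tfrac12X(\alpha\pm\beta)_{ab\,cd}.$$ In particular, with the Clifford algebra $\mathcal S$ and elements $\phi^{ab}_\gamma$ defined below and $\widehat J(\alpha_i):=\sum_{a,b,c,d=1}^k\sum_{\gamma,\delta=1}^lX(\alpha_i)_{ab\,cd}\Gamma(\alpha_i)_{\gamma\delta}\phi^{ab}_\gamma\phi^{cd}_\delta$,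 the assignment $X_i\mapsto\widehat J(\alpha_i)$ extends to a Lie algebra homomorphism $\mathfrak k\to(\mathcal S,[\cdot,\cdot])$, i.e. a finite-dimensional representation of $\mathfrak k$.
   Context: Let $A=(a_{ij})_{1\le i,j\le n}$ be a symmetrizable simply laced generalized Cartan matrix (off-diagonal entries $0$ or $-1$); the Dynkin diagram has an edge between $i\ne j$ iff $a_{ij}=-1$. Let $\mathfrak g$ be the split real Kac–Moody algebra of $A$ with Chevalley generators $e_i,f_i$, Cartan subalgebra $\mathfrak h$ (from a real realization), simple roots $\alpha_1,\dots,\alpha_n\in\mathfrak h^*$, real roots $\Delta^{\mathrm{re}}$, and let $(\cdot|\cdot)$ be the nondegenerate invariant symmetric bilinear form induced on $\mathfrak h^*$, with $(\alpha_i|\alpha_j)=a_{ij}$. Let $\mathfrak k$ be the fixed-point subalgebra of the Chevalley involution ($e_i\mapsto -f_i$, $f_i\mapsto-e_i$, $h\mapsto -h$), with Berman generators $X_i=e_i-f_i$; $\mathfrak k$ is presented by generators $X_1,\dots,X_n$ and relations $[X_i,[X_i,X_j]]=-X_j$ if $a_{ij}=-1$, $[X_i,X_j]=0$ if $a_{ij}=0$. A generalized spin representation is a representation $\rho$ of $\mathfrak k$ with $\rho(X_i)^2=-\frac14\mathrm{id}$. Fix a finite-dimensional real vector space $S$ with positive definite inner product $q_2$ and orthonormal basis $f_1,\dots,f_l$, and a generalized spin representation $\rho:\mathfrak k\to\mathrm{End}(S)$ whose values $\rho(X_i)$ are anti-symmetric real matrices in this basis (such exist, e.g. by realifying the generalized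 spin representations with compact image of Hainke–Köhl–Levy); put $\Gamma(\alpha_i):=2\rho(X_i)$. Let $W=\mathrm{Sym}^2(\mathfrak h^* )$ (symmetric tensors in $\mathfrak h^*\otimes\mathfrak h^*$) with the symmetric bilinear form $q_1$ obtained by restricting $(\cdot|\cdot)\otimes(\cdot|\cdot)$; let $q=q_1\otimes q_2$ on $W\otimes S$, and $\mathcal S$ the Clifford algebra of $W\otimes S$: the tensor algebra modulo the ideal generated by $w\otimes w-\frac12q(w,w)\cdot1$. Put $\phi^{ab}_\gamma:=\frac12(v^a\otimes v^b+v^b\otimes v^a)\otimes f_\gamma\in\mathcal S$. *)

From HB Require Import structures.
From mathcomp Require Import all_boot all_order all_algebra.
Set Implicit Arguments. Unset Strict Implicit. Unset Printing Implicit Defensive.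
Import Order.TTheory GRing.Theory Num.Theory.
Local Open Scope ring_scope.

Definition simply_laced_GCM (n : nat) (A : 'M[int]_n) : Prop :=
  (forall i, A i i = 2) /\
  (forall i j, i != j -> A i j = 0 \/ A i j = -1) /\
  (forall i j, A i j = 0 <-> A j i = 0).

(* Coordinates: h^* = R^k with basis v^1..v^k, elements are row vectors of
   coordinates (alpha = \sum_a alpha_a v^a), and G a b = G^{ab} = (v^a|v^b). *)
Definition kform (R : nzRingType) (k : nat) (G : 'M[R]_k) (x y : 'rV[R]_k) : R :=
  (x *m G *m y^T) 0 0.

(* Simple reflection s_i(x) = x - <x, alpha_i^vee> alpha_i = x - (x|alpha_i) alpha_i
   (simply laced, (alpha_i|alpha_i) = 2). *)
Definition refl (R : nzRingType) (k : nat) (G : 'M[R]_k) (ai x : 'rV[R]_k) : 'rV[R]_k :=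
  x - kform G x ai *: ai.

Inductive real_root (R : nzRingType) (n k : nat) (G : 'M[R]_k)
    (sr : 'I_n -> 'rV[R]_k) : 'rV[R]_k -> Prop :=
| rr_simple i : real_root G sr (sr i)
| rr_refl i b : real_root G sr b -> real_root G sr (refl G (sr i) b).

Definition Xt (R : fieldType) (k : nat) (G : 'M[R]_k) (al : 'rV[R]_k)
    (a b c d : 'I_k) : R :=
  let Gi := invmx G in
  let x := fun e => al 0 e in
  2^-1 * (x a * x b * x c * x d)
  - 4^-1 * (x a * Gi b c * x d + x b * Gi a c * x d
            + x a * Gi b d * x c + x b * Gi a d * x c)
  + 4^-1 * (2^-1 * (Gi a c * Gi d b + Gi a d * Gi c b)).

Definition contr (R : nzRingType) (k : nat) (G : 'M[R]_k)
    (X Y : 'I_k -> 'I_k -> 'I_k -> 'I_k -> R) (a b c d : 'I_k) : R :=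
  \sum_(e < k) \sum_(f < k) \sum_(g < k) \sum_(h < k)
     X a b e f * G e g * G f h * Y g h c d.

(* Tensors in h^* (x) h^* (x) S: T represents \sum T(a,b,g) v^a (x) v^b (x) f_g. *)
Notation tensor R k l := {ffun 'I_k * 'I_k * 'I_l -> R^o}.

(* Membership in W (x) S, W = Sym^2(h^* ). *)
Definition symtensor (R : nzRingType) (k l : nat) (T : tensor R k l) : Prop :=
  forall a b g, T (a, b, g) = T (b, a, g).

(* q = q1 (x) q2, q1(v^a(x)v^b, v^c(x)v^d) = G^{ac} G^{bd}, q2(f_g,f_h) = delta_gh. *)
Definition qform (R : nzRingType) (k l : nat) (G : 'M[R]_k) (T U : tensor R k l) : R :=
  \sum_(a < k) \sum_(b < k) \sum_(c < k) \sum_(d < k) \sum_(g < l)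
     T (a, b, g) * U (c, d, g) * G a c * G b d.

Definition phi (R : fieldType) (k l : nat) (a b : 'I_k) (g : 'I_l) : tensor R k l :=
  [ffun x => 2^-1 * ((x == (a, b, g))%:R + (x == (b, a, g))%:R)].

(* A "Clifford map" of (W (x) S, q) into an R-algebra B: linear on W (x) S and
   iota(w)^2 = 1/2 q(w,w) 1. The Clifford algebra is the universal such. *)
Definition clifford_map (R : fieldType) (k l : nat) (G : 'M[R]_k)
    (B : algType R) (iota : tensor R k l -> B) : Prop :=
  (forall (c : R) (T U : tensor R k l), symtensor T -> symtensor U ->
      iota (c *: T + U) = c *: iota T + iota U) /\
  (forall T : tensor R k l, symtensor T -> iota T * iota T = (2^-1 * qform G T T)%:A).

(* hat J(alpha_i) = \sum_{abcd} \sum_{g d} X(alpha_i)_{ab cd} Gamma(alpha_i)_{g d}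
   phi^{ab}_g phi^{cd}_d, with Gamma(alpha_i) = 2 rho(X_i). *)
Definition Jhat (R : fieldType) (k l : nat) (G : 'M[R]_k) (B : algType R)
    (iota : tensor R k l -> B) (ai : 'rV[R]_k) (Gam : 'M[R]_l) : B :=
  \sum_(a < k) \sum_(b < k) \sum_(c < k) \sum_(d < k) \sum_(g < l) \sum_(h < l)
    (Xt G ai a b c d * Gam g h) *: (iota (phi R a b g) * iota (phi R c d h)).

Definition lbr (B : nzRingType) (x y : B) : B := x * y - y * x.
Definition mxbr (R : nzRingType) (l : nat) (x y : 'M[R]_l) : 'M[R]_l := x *m y - y *m x.

(* The defining relations of k (Berman presentation) for images Y_i of X_i
   under a map into a Lie algebra with bracket br. *)
Definition k_relations (n : nat) (A : 'M[int]_n) (T : zmodType) (br : T -> T -> T)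
    (Y : 'I_n -> T) : Prop :=
  forall i j : 'I_n,
    (A i j = -1 -> br (Y i) (br (Y i) (Y j)) = - Y j) /\
    (A i j = 0 -> br (Y i) (Y j) = 0).

(* Generalized spin representation with anti-symmetric values, in the
   orthonormal basis f_1..f_l: Rho i = rho(X_i). *)
Definition gen_spin_rep (R : fieldType) (n l : nat) (A : 'M[int]_n)
    (Rho : 'I_n -> 'M[R]_l) : Prop :=
  k_relations A (@mxbr R l) Rho /\
  (forall i, Rho i *m Rho i = - (4^-1 %:M)) /\
  (forall i, (Rho i)^T = - Rho i).

(* Write H = G^-1 and u = x^T x.  Then X(x) is a linear combination of the
   Kronecker products (P (x) Q)_{ab,cd} = P_ac Q_bd and their partial transposes
   P_ad Q_bc built from u and H, and contracting two such products through G just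
   multiplies the factors as matrices.  Since u G u' = (x|x') x^T x' and
   H G = G H = 1, each contraction identity becomes a polynomial identity in the
   entries of x, y and H once (x|x) = (y|y) = 2, which holds for all real roots
   because the simple reflections preserve the form.

   Write Q(M) = sum_{I,J} M_IJ e_I e_J for the quadratic element of the Clifford
   algebra with coefficients M, where e_I = iota(phi_I) and e_I e_J + e_J e_I = q_IJ.
   Then J(alpha) = Q(M) with the skew coefficient M = X(alpha) (x) Gamma(alpha).
   For skew M the bracket with Q(M) is a derivation sending e_c to
   2 sum_a (M q)_ac e_a, whence [Q(M), Q(N)] = 2 Q(M q N - N q M), and M q N is
   again a contraction of X's tensored with a product of Gamma's.  The Berman
   relations then follow from the contraction identities together with
   Gamma_i^2 = -1 and Gamma_i Gamma_j Gamma_i = Gamma_j if a_ij = -1, respectively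
   Gamma_i Gamma_j = Gamma_j Gamma_i if a_ij = 0. *)

From Pilot Require Import Defs.
From mathcomp Require Import all_boot all_order all_algebra.
From mathcomp Require Import reals.
From mathcomp Require Import ring lra.
Set Implicit Arguments. Unset Strict Implicit. Unset Printing Implicit Defensive.
Import GRing.Theory.
Local Open Scope ring_scope.

Section Kform.
Variables (R : comNzRingType) (k : nat) (G : 'M[R]_k).

Lemma kformDl x y z : kform G (x + y) z = kform G x z + kform G y z.
Proof. by rewrite /kform !mulmxDl mxE. Qed.

Lemma kformDr x y z : kform G x (y + z) = kform G x y + kform G x z.
Proof. by rewrite /kform raddfD mulmxDr mxE. Qed.

Lemma kformZl s x y : kform G (s *: x) y = s * kform G x y.
Proof. by rewrite /kform -!scalemxAl mxE. Qed.

Lemma kformZr s x y : kform G x (s *: y) = s * kform G x y.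
Proof. by rewrite /kform linearZ /= -scalemxAr mxE. Qed.

Lemma kformNl x y : kform G (- x) y = - kform G x y.
Proof. by rewrite -scaleN1r kformZl mulN1r. Qed.

Lemma kformNr x y : kform G x (- y) = - kform G x y.
Proof. by rewrite -scaleN1r kformZr mulN1r. Qed.

Lemma kform_sym (GT : G^T = G) x y : kform G x y = kform G y x.
Proof.
rewrite /kform -[in LHS](trmxK (x *m G *m y^T)) [in LHS]mxE.
by rewrite !trmx_mul trmxK GT mulmxA.
Qed.

Lemma real_root_norm n (sr : 'I_n -> 'rV[R]_k) :
  G^T = G -> (forall i, kform G (sr i) (sr i) = 2) ->
  forall x, real_root G sr x -> kform G x x = 2.
Proof.
move=> GT hs x; elim=> [i | i b _ IH] //.
rewrite /refl kformDl !kformDr !kformNl !kformNr !kformZl !kformZr IH hs.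
by rewrite (kform_sym GT (sr i) b); ring.
Qed.

End Kform.

Lemma lbr_suml (B : nzRingType) (I : Type) (r : seq I) (P : pred I) (F : I -> B) y :
  lbr (\sum_(i <- r | P i) F i) y = \sum_(i <- r | P i) lbr (F i) y.
Proof. by rewrite /lbr mulr_sumr mulr_suml -sumrB. Qed.

Lemma lbr_sumr (B : nzRingType) (I : Type) (r : seq I) (P : pred I) x (F : I -> B) :
  lbr x (\sum_(i <- r | P i) F i) = \sum_(i <- r | P i) lbr x (F i).
Proof. by rewrite /lbr mulr_sumr mulr_suml -sumrB. Qed.

Lemma lbrZl (R : pzRingType) (B : algType R) s (x y : B) : lbr (s *: x) y = s *: lbr x y.
Proof. by rewrite /lbr -scalerAr -scalerAl -scalerBr. Qed.

Lemma lbrZr (R : pzRingType) (B : algType R) s (x y : B) : lbr x (s *: y) = s *: lbr x y.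
Proof. by rewrite /lbr -scalerAr -scalerAl -scalerBr. Qed.

Lemma lbrBr (B : nzRingType) (x y z : B) : lbr x (y - z) = lbr x y - lbr x z.
Proof.
by rewrite /lbr mulrBr mulrBl !opprB [RHS]addrACA [LHS]addrACA [- (x * z) + _]addrC.
Qed.

Lemma lbrMr (B : nzRingType) (x y z : B) : lbr x (y * z) = lbr x y * z + y * lbr x z.
Proof. by rewrite /lbr mulrBl mulrBr !mulrA addrA subrK. Qed.

Lemma scalemx_mul (R : comNzRingType) m n p a b (A : 'M[R]_(m, n)) (B : 'M[R]_(n, p)) :
  (a *: A) *m (b *: B) = (a * b) *: (A *m B).
Proof. by rewrite -scalemxAl -scalemxAr scalerA. Qed.

Lemma sum_delta (R : pzSemiRingType) (T : finType) (p : T) (F : T -> R) :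
  \sum_x (x == p)%:R * F x = F p.
Proof.
rewrite (bigD1 p) //= eqxx mul1r big1 ?addr0 // => x /negbTE ->.
by rewrite mul0r.
Qed.

Lemma sum_pair (T1 T2 : finType) (V : nmodType) (F : T1 * T2 -> V) :
  \sum_p F p = \sum_a \sum_b F (a, b).
Proof. by rewrite (pair_bigA _ (fun a b => F (a, b))); apply: eq_bigr => -[a b]. Qed.

Lemma sum_triple (T1 T2 T3 : finType) (V : nmodType) (F : T1 * T2 * T3 -> V) :
  \sum_x F x = \sum_a \sum_b \sum_c F (a, b, c).
Proof. by rewrite sum_pair (sum_pair (fun p => \sum_c F (p, c))). Qed.

Lemma sum_pair_mul (R : comPzRingType) (T1 T2 : finType)
    (f : T1 -> T1 -> R) (g : T2 -> T2 -> R) :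
  \sum_(x : T1 * T2) \sum_(y : T1 * T2) f x.1 y.1 * g x.2 y.2
  = (\sum_x1 \sum_y1 f x1 y1) * (\sum_x2 \sum_y2 g x2 y2).
Proof.
rewrite sum_pair mulr_suml; apply: eq_bigr => x1 _.
under eq_bigr => x2 _ do rewrite sum_pair.
rewrite mulr_suml exchange_big; apply: eq_bigr => y1 _.
rewrite mulr_sumr; apply: eq_bigr => x2 _.
by rewrite mulr_sumr.
Qed.

Section FourTensors.
Variables (R : comNzRingType) (k : nat) (G : 'M[R]_k).

Definition tensor4 := 'I_k -> 'I_k -> 'I_k -> 'I_k -> R.

Definition kron (P Q : 'M[R]_k) : tensor4 := fun a b c d => P a c * Q b d.
Definition kron_swap (P Q : 'M[R]_k) : tensor4 := fun a b c d => P a d * Q b c.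
Definition tadd (X Y : tensor4) : tensor4 := fun a b c d => X a b c d + Y a b c d.
Definition tscale (s : R) (X : tensor4) : tensor4 := fun a b c d => s * X a b c d.

Definition sym_first (X : tensor4) := forall a b c d, X b a c d = X a b c d.
Definition sym_pairs (X : tensor4) := forall a b c d, X c d a b = X a b c d.

Lemma eq_contr X X' Y Y' :
  (forall a b c d, X a b c d = X' a b c d) -> (forall a b c d, Y a b c d = Y' a b c d) ->
  forall a b c d, contr G X Y a b c d = contr G X' Y' a b c d.
Proof.
move=> eX eY a b c d; do 4 (apply: eq_bigr => ? _).
by rewrite eX eY.
Qed.

Lemma contr_sym_first X Y : sym_first X -> sym_first (contr G X Y).
Proof. by move=> sX a b c d; do 4 (apply: eq_bigr => ? _); rewrite sX. Qed.

Lemma contrDl X1 X2 Y a b c d :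
  contr G (tadd X1 X2) Y a b c d = contr G X1 Y a b c d + contr G X2 Y a b c d.
Proof.
rewrite -big_split; apply: eq_bigr => e _; rewrite -big_split; apply: eq_bigr => f _.
rewrite -big_split; apply: eq_bigr => g _; rewrite -big_split; apply: eq_bigr => h _.
by rewrite /tadd !mulrDl.
Qed.

Lemma contrDr X Y1 Y2 a b c d :
  contr G X (tadd Y1 Y2) a b c d = contr G X Y1 a b c d + contr G X Y2 a b c d.
Proof.
rewrite -big_split; apply: eq_bigr => e _; rewrite -big_split; apply: eq_bigr => f _.
rewrite -big_split; apply: eq_bigr => g _; rewrite -big_split; apply: eq_bigr => h _.
by rewrite /tadd mulrDr.
Qed.

Lemma contrZl s X Y a b c d : contr G (tscale s X) Y a b c d = s * contr G X Y a b c d.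
Proof.
rewrite mulr_sumr; apply: eq_bigr => e _; rewrite mulr_sumr; apply: eq_bigr => f _.
rewrite mulr_sumr; apply: eq_bigr => g _; rewrite mulr_sumr; apply: eq_bigr => h _.
by rewrite /tscale !mulrA.
Qed.

Lemma contrZr s X Y a b c d : contr G X (tscale s Y) a b c d = s * contr G X Y a b c d.
Proof.
rewrite mulr_sumr; apply: eq_bigr => e _; rewrite mulr_sumr; apply: eq_bigr => f _.
rewrite mulr_sumr; apply: eq_bigr => g _; rewrite mulr_sumr; apply: eq_bigr => h _.
by rewrite /tscale; ring.
Qed.

Lemma mulmx3E (P Q S : 'M[R]_k) i j :
  (P *m Q *m S) i j = \sum_(e < k) \sum_(g < k) P i e * Q e g * S g j.
Proof.
rewrite mxE exchange_big; apply: eq_bigr => g _.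
by rewrite mxE mulr_suml.
Qed.

Lemma sum4_mul (F1 F2 : 'I_k -> 'I_k -> R) :
  \sum_(e < k) \sum_(f < k) \sum_(g < k) \sum_(h < k) F1 e g * F2 f h =
  (\sum_(e < k) \sum_(g < k) F1 e g) * (\sum_(f < k) \sum_(h < k) F2 f h).
Proof.
rewrite mulr_suml; apply: eq_bigr => e _.
rewrite mulr_suml exchange_big; apply: eq_bigr => f _.
rewrite mulr_sumr; apply: eq_bigr => g _.
by rewrite mulr_sumr.
Qed.

Lemma contr_kron_kron P Q S T a b c d :
  contr G (kron P Q) (kron S T) a b c d = kron (P *m G *m S) (Q *m G *m T) a b c d.
Proof.
rewrite /contr /kron !mulmx3E -sum4_mul.
by do 4 (apply: eq_bigr => ? _); ring.
Qed.

Lemma contr_kron_swap P Q S T a b c d :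
  contr G (kron P Q) (kron_swap S T) a b c d
  = kron_swap (P *m G *m S) (Q *m G *m T) a b c d.
Proof.
rewrite /contr /kron /kron_swap !mulmx3E -sum4_mul.
by do 4 (apply: eq_bigr => ? _); ring.
Qed.

Lemma contr_swap_kron P Q S T a b c d :
  contr G (kron_swap P Q) (kron S T) a b c d
  = kron_swap (P *m G *m T) (Q *m G *m S) a b c d.
Proof.
rewrite /contr /kron /kron_swap !mulmx3E mulrC -sum4_mul.
by do 4 (apply: eq_bigr => ? _); ring.
Qed.

Lemma contr_swap_swap P Q S T a b c d :
  contr G (kron_swap P Q) (kron_swap S T) a b c d
  = kron (P *m G *m T) (Q *m G *m S) a b c d.
Proof.
rewrite /contr /kron /kron_swap !mulmx3E mulrC -sum4_mul.
by do 4 (apply: eq_bigr => ? _); ring.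
Qed.

End FourTensors.

Section RootTensor.
Variables (R : numFieldType) (k : nat) (G H : 'M[R]_k).
Hypothesis (GT : G^T = G) (mulHG : H *m G = 1%:M) (mulGH : G *m H = 1%:M).

Definition dyad (x : 'rV[R]_k) := x^T *m x.

(* The tensor X(x) of Defs with H in place of G^-1; [dyad x] has entries x_a x_b. *)
Definition root_tensor (x : 'rV[R]_k) : tensor4 R k :=
  let u := dyad x in
  tadd (tscale 2^-1 (kron u u))
  (tadd (tscale (- 4^-1)
     (tadd (tadd (kron_swap u H) (kron H u)) (tadd (kron u H) (kron_swap H u))))
  (tscale 8^-1 (tadd (kron H H) (kron_swap H H)))).

Lemma dyad_mul x y : dyad x *m G *m dyad y = kform G x y *: (x^T *m y).
Proof.
rewrite /dyad /kform.
have -> : x^T *m x *m G *m (y^T *m y) = x^T *m (x *m G *m y^T) *m y by rewrite !mulmxA.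
set s := x *m G *m y^T.
by rewrite [in LHS](mx11_scalar s) mul_mx_scalar -scalemxAl.
Qed.

Lemma mulmxGH (P : 'M[R]_k) : P *m G *m H = P. Proof. by rewrite -mulmxA mulGH mulmx1. Qed.
Lemma mulmxHG (P : 'M[R]_k) : H *m G *m P = P. Proof. by rewrite mulHG mul1mx. Qed.

Ltac expand_contr hyps :=
  rewrite /root_tensor !(contrDl, contrDr, contrZl, contrZr);
  rewrite !(contr_kron_kron, contr_kron_swap, contr_swap_kron, contr_swap_swap);
  rewrite !(mulmxGH, mulmxHG, dyad_mul) !hyps /tadd /tscale /kron /kron_swap /dyad;
  rewrite !(mxE, big_ord1).

Lemma contr_root_tensor_orth x y :
  kform G x x = 2 -> kform G y y = 2 -> kform G x y = 0 -> forall a b c d,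
  contr G (root_tensor x) (root_tensor y) a b c d
  = contr G (root_tensor y) (root_tensor x) a b c d.
Proof.
move=> hxx hyy hxy a b c d.
have hyx : kform G y x = 0 by rewrite (kform_sym GT).
expand_contr (hxx, hyy, hxy, hyx).
by field.
Qed.

Lemma dyad_opp x : dyad (- x) = dyad x.
Proof. by rewrite /dyad [(- x)^T]raddfN mulNmx mulmxN opprK. Qed.

Lemma root_tensor_opp x : root_tensor (- x) = root_tensor x.
Proof. by rewrite /root_tensor dyad_opp. Qed.

Lemma contr_root_tensor_sum x y :
  kform G x x = 2 -> kform G y y = 2 -> kform G x y = -1 -> forall a b c d,
  contr G (root_tensor x) (root_tensor y) a b c d
  + contr G (root_tensor y) (root_tensor x) a b c d
  = 2^-1 * root_tensor (x + y) a b c d.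
Proof.
move=> hxx hyy hxy a b c d.
have hyx : kform G y x = -1 by rewrite (kform_sym GT).
expand_contr (hxx, hyy, hxy, hyx).
by field.
Qed.

Lemma contr_root_tensor_diff x y :
  kform G x x = 2 -> kform G y y = 2 -> kform G x y = 1 -> forall a b c d,
  contr G (root_tensor x) (root_tensor y) a b c d
  + contr G (root_tensor y) (root_tensor x) a b c d
  = 2^-1 * root_tensor (x - y) a b c d.
Proof.
move=> hxx hyy hxy a b c d; rewrite -(root_tensor_opp y) contr_root_tensor_sum //.
- by rewrite kformNr kformNl opprK.
- by rewrite kformNr hxy.
Qed.

End RootTensor.

Section RootTensorXt.
Variables (R : numFieldType) (k : nat) (G : 'M[R]_k).
Hypothesis (GT : G^T = G) (Gu : G \in unitmx).

Lemma invmx_sym i j : invmx G i j = invmx G j i.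
Proof. by rewrite -[in LHS]GT -trmx_inv mxE. Qed.

Lemma XtE x a b c d : Xt G x a b c d = root_tensor (invmx G) x a b c d.
Proof.
rewrite /Xt /root_tensor /tadd /tscale /kron /kron_swap /dyad !(mxE, big_ord1).
rewrite (invmx_sym d b) (invmx_sym c b).
by field.
Qed.

Lemma Xt_sym_first x : sym_first (Xt G x).
Proof.
move=> a b c d; rewrite /Xt /=.
rewrite (invmx_sym d a) (invmx_sym c a) (invmx_sym d b) (invmx_sym c b); ring.
Qed.

Lemma Xt_sym_pairs x : sym_pairs (Xt G x).
Proof.
move=> a b c d; rewrite /Xt /=.
rewrite (invmx_sym c a) (invmx_sym d b) (invmx_sym c b) (invmx_sym d a); ring.
Qed.

Let mulVG := mulVmx Gu.
Let mulGV := mulmxV Gu.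

Lemma contr_Xt_orth x y :
  kform G x x = 2 -> kform G y y = 2 -> kform G x y = 0 -> forall a b c d,
  contr G (Xt G x) (Xt G y) a b c d = contr G (Xt G y) (Xt G x) a b c d.
Proof.
move=> hxx hyy hxy a b c d.
rewrite (eq_contr G (XtE x) (XtE y)) (eq_contr G (XtE y) (XtE x)).
by apply: (contr_root_tensor_orth GT mulVG mulGV).
Qed.

Lemma contr_Xt_sum x y :
  kform G x x = 2 -> kform G y y = 2 -> kform G x y = -1 -> forall a b c d,
  contr G (Xt G x) (Xt G y) a b c d + contr G (Xt G y) (Xt G x) a b c d
  = 2^-1 * Xt G (x + y) a b c d.
Proof.
move=> hxx hyy hxy a b c d.
rewrite (eq_contr G (XtE x) (XtE y)) (eq_contr G (XtE y) (XtE x)) XtE.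
by apply: (contr_root_tensor_sum GT mulVG mulGV).
Qed.

Lemma contr_Xt_diff x y :
  kform G x x = 2 -> kform G y y = 2 -> kform G x y = 1 -> forall a b c d,
  contr G (Xt G x) (Xt G y) a b c d + contr G (Xt G y) (Xt G x) a b c d
  = 2^-1 * Xt G (x - y) a b c d.
Proof.
move=> hxx hyy hxy a b c d.
rewrite (eq_contr G (XtE x) (XtE y)) (eq_contr G (XtE y) (XtE x)) XtE.
by apply: (contr_root_tensor_diff GT mulVG mulGV).
Qed.

Lemma Xt_opp x a b c d : Xt G (- x) a b c d = Xt G x a b c d.
Proof. by rewrite /Xt /= !mxE; ring. Qed.

Lemma contr_Xt_nested x y :
  kform G x x = 2 -> kform G y y = 2 -> kform G x y = -1 -> forall a b c d,
  let C1 := contr G (Xt G x) (Xt G y) in let C2 := contr G (Xt G y) (Xt G x) in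
  4 * (contr G (Xt G x) C1 a b c d + contr G C1 (Xt G x) a b c d
       + contr G (Xt G x) C2 a b c d + contr G C2 (Xt G x) a b c d)
  = Xt G y a b c d.
Proof.
move=> hxx hyy hxy a b c d C1 C2.
have C12 a' b' c' d' : tadd C1 C2 a' b' c' d' = tscale 2^-1 (Xt G (x + y)) a' b' c' d'.
  by rewrite /tadd /tscale /C1 /C2 contr_Xt_sum.
have hx_xy : kform G x (x + y) = 1 by rewrite kformDr hxx hxy; ring.
have hxy_xy : kform G (x + y) (x + y) = 2.
  by rewrite kformDl !kformDr hxx hyy hxy (kform_sym GT y x) hxy; ring.
have := contr_Xt_diff hxx hxy_xy hx_xy a b c d.
rewrite opprD addrA subrr add0r Xt_opp => hone.
have e1 : contr G (Xt G x) C1 a b c d + contr G (Xt G x) C2 a b c d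
          = 2^-1 * contr G (Xt G x) (Xt G (x + y)) a b c d.
  by rewrite -contrDr -contrZr; apply: eq_contr.
have e2 : contr G C1 (Xt G x) a b c d + contr G C2 (Xt G x) a b c d
          = 2^-1 * contr G (Xt G (x + y)) (Xt G x) a b c d.
  by rewrite -contrDl -contrZl; apply: eq_contr.
transitivity (4 * ((contr G (Xt G x) C1 a b c d + contr G (Xt G x) C2 a b c d)
                 + (contr G C1 (Xt G x) a b c d + contr G C2 (Xt G x) a b c d))).
  by ring.
by rewrite e1 e2 -mulrDr hone; field.
Qed.

End RootTensorXt.

Section CliffordBracket.
Variables (R : comNzRingType) (B : algType R) (I : finType) (e : I -> B) (q : I -> I -> R).
Hypothesis e_anticomm : forall i j, e i * e j + e j * e i = (q i j)%:A.
Hypothesis q_sym : forall i j, q i j = q j i.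

Definition cliff_quad (M : I -> I -> R) : B := \sum_i \sum_j M i j *: (e i * e j).
Definition mulq (M : I -> I -> R) i j := \sum_l M i l * q l j.
Definition qmul (M N : I -> I -> R) i j := \sum_l mulq M i l * N l j.
Definition skew_coef (M : I -> I -> R) := forall i j, M i j = - M j i.

Lemma lbr_pair_gen a b c : lbr (e a * e b) (e c) = q b c *: e a - q a c *: e b.
Proof.
have swap i j : e i * e j = (q i j)%:A - e j * e i by rewrite -e_anticomm addrK.
rewrite /lbr [e c * _]mulrA -[e a * e b * e c]mulrA (swap b c) (swap c a).
rewrite mulrBr mulrBl mulr_algr mulr_algl.
by rewrite (q_sym c a) mulrA opprB addrA subrK.
Qed.

Lemma lbr_quad_gen M c : skew_coef M ->
  lbr (cliff_quad M) (e c) = \sum_a (2 * mulq M a c) *: e a.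
Proof.
move=> skM; rewrite lbr_suml.
under eq_bigr => a _ do rewrite lbr_suml.
under eq_bigr => a _ do under eq_bigr => b _ do
  rewrite lbrZl lbr_pair_gen scalerBr !scalerA.
under eq_bigr => a _ do rewrite sumrB.
rewrite sumrB [X in _ - X]exchange_big -sumrB /=; apply: eq_bigr => a _.
rewrite -!scaler_suml -scalerBl; congr (_ *: _).
rewrite /mulq -sumrB mulr_sumr; apply: eq_bigr => b _.
by rewrite (skM b a); ring.
Qed.

Lemma mulq_skew_sum M N c a : skew_coef M ->
  \sum_d N c d * mulq M a d = - qmul N M c a.
Proof.
move=> skM; rewrite /qmul /mulq -sumrN.
under eq_bigr => d _ do rewrite mulr_sumr.
rewrite exchange_big; apply: eq_bigr => l _.
rewrite mulr_suml -sumrN; apply: eq_bigr => d _.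
by rewrite (skM a l) (q_sym l d); ring.
Qed.

Lemma lbr_quad M N : skew_coef M ->
  lbr (cliff_quad M) (cliff_quad N)
  = cliff_quad (fun i j => 2 * (qmul M N i j - qmul N M i j)).
Proof.
move=> skM; rewrite {2}/cliff_quad lbr_sumr.
under eq_bigr => c _ do rewrite lbr_sumr.
under eq_bigr => c _ do under eq_bigr => d _ do
  rewrite lbrZr lbrMr !lbr_quad_gen // mulr_suml mulr_sumr scalerDr
          !scaler_sumr.
under eq_bigr => c _ do rewrite big_split.
rewrite big_split /cliff_quad /=.
under [RHS]eq_bigr => i _ do under eq_bigr => j _ do
  rewrite mulrBr scalerBl -scaleNr.
under [RHS]eq_bigr => i _ do rewrite big_split.
rewrite [RHS]big_split /=; congr (_ + _).
- rewrite exchange_big; under eq_bigr => d _ do rewrite exchange_big.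
  rewrite exchange_big; apply: eq_bigr => i _; apply: eq_bigr => d _.
  rewrite /qmul mulr_sumr scaler_suml; apply: eq_bigr => c _.
  by rewrite -scalerAl scalerA; congr (_ *: _); ring.
- apply: eq_bigr => c _; rewrite exchange_big; apply: eq_bigr => i _.
  rewrite -mulrN -mulq_skew_sum // mulr_sumr scaler_suml; apply: eq_bigr => d _.
  by rewrite -scalerAr scalerA; congr (_ *: _); ring.
Qed.

Lemma eq_cliff_quad M N : (forall i j, M i j = N i j) -> cliff_quad M = cliff_quad N.
Proof. by move=> eMN; apply: eq_bigr => i _; apply: eq_bigr => j _; rewrite eMN. Qed.

Lemma cliff_quadB M N :
  cliff_quad M - cliff_quad N = cliff_quad (fun i j => M i j - N i j).
Proof.
rewrite -sumrB; apply: eq_bigr => i _; rewrite -sumrB; apply: eq_bigr => j _.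
by rewrite scalerBl.
Qed.

Lemma cliff_quadZ s M : s *: cliff_quad M = cliff_quad (fun i j => s * M i j).
Proof.
rewrite scaler_sumr; apply: eq_bigr => i _; rewrite scaler_sumr; apply: eq_bigr => j _.
by rewrite scalerA.
Qed.

Lemma cliff_quadN M : - cliff_quad M = cliff_quad (fun i j => - M i j).
Proof. by rewrite -scaleN1r cliff_quadZ; apply: eq_cliff_quad => i j; rewrite mulN1r. Qed.

End CliffordBracket.

Section SpinClifford.
Variables (R : numFieldType) (k l : nat) (G : 'M[R]_k).
Hypothesis GT : G^T = G.

Lemma Gsym i j : G i j = G j i.
Proof. by rewrite -[in LHS]GT mxE. Qed.

Definition qweight (x y : 'I_k * 'I_k * 'I_l) : R :=
  (x.2 == y.2)%:R * G x.1.1 y.1.1 * G x.1.2 y.1.2.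

Lemma qformE (T U : tensor R k l) :
  qform G T U = \sum_x T x * \sum_y U y * qweight x y.
Proof.
have collapse a b g c d :
    T (a, b, g) * \sum_h U (c, d, h) * qweight (a, b, g) (c, d, h)
    = T (a, b, g) * U (c, d, g) * G a c * G b d.
  rewrite (bigD1 g) //= big1 => [|h /negbTE hg]; rewrite /qweight /=.
    by rewrite eqxx mul1r addr0 !mulrA.
  by rewrite eq_sym hg !mul0r mulr0.
rewrite /qform sum_triple; apply: eq_bigr => a _; apply: eq_bigr => b _; symmetry.
under eq_bigr => g _ do rewrite sum_triple mulr_sumr.
under eq_bigr => g _ do under eq_bigr => c _ do rewrite mulr_sumr.
under eq_bigr => g _ do under eq_bigr => c _ do under eq_bigr => d _ do rewrite collapse.
rewrite exchange_big; apply: eq_bigr => c _.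
by rewrite exchange_big.
Qed.

Lemma sum_phi a b g (F : 'I_k * 'I_k * 'I_l -> R) :
  \sum_x phi R a b g x * F x = 2^-1 * (F (a, b, g) + F (b, a, g)).
Proof.
under eq_bigr => x _ do rewrite ffunE -mulrA mulrDl.
by rewrite -mulr_sumr big_split !sum_delta.
Qed.

Definition qphi (x y : 'I_k * 'I_k * 'I_l) : R :=
  (x.2 == y.2)%:R
  * (2^-1 * (G x.1.1 y.1.1 * G x.1.2 y.1.2 + G x.1.1 y.1.2 * G x.1.2 y.1.1)).

Lemma qform_phi a b g c d h :
  qform G (phi R a b g) (phi R c d h) = qphi (a, b, g) (c, d, h).
Proof.
rewrite qformE sum_phi !sum_phi /qweight /qphi /=.
by field.
Qed.

Lemma qform_sym (T U : tensor R k l) : qform G T U = qform G U T.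
Proof.
rewrite !qformE; under eq_bigr => x _ do rewrite mulr_sumr.
rewrite exchange_big; apply: eq_bigr => y _; rewrite mulr_sumr; apply: eq_bigr => x _.
by rewrite /qweight (eq_sym y.2) (Gsym y.1.1) (Gsym y.1.2); ring.
Qed.

Lemma qformDl (T1 T2 U : tensor R k l) :
  qform G (T1 + T2) U = qform G T1 U + qform G T2 U.
Proof.
rewrite !qformE -big_split; apply: eq_bigr => x _.
by rewrite ffunE mulrDl.
Qed.

Lemma qformDr (T U1 U2 : tensor R k l) :
  qform G T (U1 + U2) = qform G T U1 + qform G T U2.
Proof. by rewrite qform_sym qformDl !(qform_sym U1) (qform_sym U2). Qed.

Lemma clifford_anticomm (B : algType R) (iota : tensor R k l -> B) :
  clifford_map G iota -> forall T U, symtensor T -> symtensor U ->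
  iota T * iota U + iota U * iota T = (qform G T U)%:A.
Proof.
move=> [iota_lin iota_sq] T U sT sU.
have sTU : symtensor (T + U) by move=> a b g; rewrite !ffunE sT sU.
have iotaD : iota (T + U) = iota T + iota U.
  by have := iota_lin 1 T U sT sU; rewrite !scale1r.
have := iota_sq _ sTU.
rewrite iotaD mulrDl !mulrDr (iota_sq _ sT) (iota_sq _ sU).
rewrite [(_)%:A + _]addrC addrACA => sq_sum.
rewrite -(addrK ((2^-1 * qform G T T)%:A + (2^-1 * qform G U U)%:A) (_ + _)) sq_sum.
rewrite -scalerDl -scalerBl qformDl !qformDr (qform_sym U T).
by congr (_ *: _); field.
Qed.

Lemma qphi_sym x y : qphi x y = qphi y x.
Proof. by rewrite /qphi eq_sym !(Gsym y.1.1) !(Gsym y.1.2); congr (_ * (_ * _)); ring. Qed.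

Definition spin_coef (X : tensor4 R k) (Gam : 'M[R]_l) (x y : 'I_k * 'I_k * 'I_l) : R :=
  X x.1.1 x.1.2 y.1.1 y.1.2 * Gam x.2 y.2.

Lemma contr_symmetrized (X Y : tensor4 R k) a b c d : sym_first Y ->
  \sum_e \sum_f \sum_g \sum_h
    X a b e f * (2^-1 * (G e g * G f h + G e h * G f g)) * Y g h c d
  = contr G X Y a b c d.
Proof.
move=> sY.
have swapped : \sum_e \sum_f \sum_g \sum_h X a b e f * G e h * G f g * Y g h c d
               = contr G X Y a b c d.
  apply: eq_bigr => e _; apply: eq_bigr => f _; rewrite exchange_big.
  by apply: eq_bigr => g _; apply: eq_bigr => h _; rewrite -sY.
transitivity (2^-1 * (contr G X Y a b c d + contr G X Y a b c d)); last by field.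
rewrite -{2}swapped /contr -big_split mulr_sumr; apply: eq_bigr => e _.
rewrite -big_split mulr_sumr; apply: eq_bigr => f _.
rewrite -big_split mulr_sumr; apply: eq_bigr => g _.
by rewrite -big_split mulr_sumr; apply: eq_bigr => h _ /=; field.
Qed.

Lemma qmul_spin_coef X Y Gam Del x y : sym_first Y ->
  qmul qphi (spin_coef X Gam) (spin_coef Y Del) x y
  = spin_coef (contr G X Y) (Gam *m Del) x y.
Proof.
move=> sY; rewrite /qmul /mulq.
under eq_bigr => z _ do rewrite mulr_suml.
rewrite exchange_big.
pose f (p p' : 'I_k * 'I_k) := X x.1.1 x.1.2 p.1 p.2
  * (2^-1 * (G p.1 p'.1 * G p.2 p'.2 + G p.1 p'.2 * G p.2 p'.1)) * Y p'.1 p'.2 y.1.1 y.1.2.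
pose g (i j : 'I_l) := Gam x.2 i * ((i == j)%:R * Del j y.2).
transitivity (\sum_x' \sum_y' f x'.1 y'.1 * g x'.2 y'.2).
  by do 2 (apply: eq_bigr => ? _); rewrite /spin_coef /qphi /f /g; ring.
rewrite sum_pair_mul /spin_coef -contr_symmetrized // mxE; congr (_ * _).
  by rewrite sum_pair; apply: eq_bigr => e _; apply: eq_bigr => f' _; rewrite sum_pair.
apply: eq_bigr => i _; rewrite /g -mulr_sumr.
by under eq_bigr => j _ do rewrite eq_sym; rewrite sum_delta.
Qed.

Lemma phi_sym a b (g : 'I_l) : symtensor (phi R a b g : tensor R k l).
Proof.
move=> x y h; rewrite !ffunE !xpair_eqE.
by rewrite (andbC (x == a)) (andbC (x == b)) addrC.
Qed.

Lemma skew_spin_coef (X : tensor4 R k) (Gam : 'M[R]_l) :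
  sym_pairs X -> Gam^T = - Gam -> skew_coef (spin_coef X Gam).
Proof.
move=> sX aGam x y; have := congr1 (fun A : 'M[R]_l => A y.2 x.2) aGam.
by rewrite /spin_coef sX !mxE => ->; rewrite mulrN.
Qed.

Section SpinQuad.
Variables (B : algType R) (iota : tensor R k l -> B).
Hypothesis iota_cliff : clifford_map G iota.

Definition spin_gen (x : 'I_k * 'I_k * 'I_l) : B := iota (phi R x.1.1 x.1.2 x.2).

Definition spin_quad (X : tensor4 R k) (Gam : 'M[R]_l) : B :=
  cliff_quad spin_gen (spin_coef X Gam).

Lemma spin_gen_anticomm x y :
  spin_gen x * spin_gen y + spin_gen y * spin_gen x = (qphi x y)%:A.
Proof.
case: x => [[a b] g]; case: y => [[c d] h].
by rewrite (clifford_anticomm iota_cliff (phi_sym _ _ _) (phi_sym _ _ _)) qform_phi.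
Qed.

Lemma Jhat_spin_quad x Gam : Jhat G iota x Gam = spin_quad (Xt G x) Gam.
Proof.
rewrite /spin_quad /cliff_quad sum_triple; apply: eq_bigr => a _; apply: eq_bigr => b _.
symmetry; under eq_bigr => g _ do rewrite sum_triple.
rewrite exchange_big; apply: eq_bigr => c _.
by rewrite exchange_big.
Qed.

Lemma eq_spin_quad (X X' : tensor4 R k) (Gam : 'M[R]_l) :
  (forall a b c d, X a b c d = X' a b c d) -> spin_quad X Gam = spin_quad X' Gam.
Proof. by move=> eX; apply: eq_cliff_quad => x y; rewrite /spin_coef eX. Qed.

Lemma lbr_spin (X Y : tensor4 R k) (Gam Del : 'M[R]_l) :
  sym_first X -> sym_pairs X -> Gam^T = - Gam -> sym_first Y ->
  lbr (spin_quad X Gam) (spin_quad Y Del)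
  = 2 *: spin_quad (contr G X Y) (Gam *m Del) - 2 *: spin_quad (contr G Y X) (Del *m Gam).
Proof.
move=> s1X s2X aGam s1Y.
rewrite /spin_quad (lbr_quad spin_gen_anticomm qphi_sym); last exact: skew_spin_coef.
rewrite !cliff_quadZ cliff_quadB; apply: eq_cliff_quad => x y.
by rewrite !qmul_spin_coef // mulrBr.
Qed.

End SpinQuad.

End SpinClifford.

Section Gamma.
Variables (R : realFieldType) (l : nat).

Lemma gamma_sqr (rho : 'M[R]_l) :
  rho *m rho = - (4^-1)%:M -> (2%:R *: rho) *m (2%:R *: rho) = - 1%:M.
Proof.
move=> sq; rewrite scalemx_mul sq scalerN scale_scalar_mx.
by congr (- _%:M); field.
Qed.

Lemma gamma_sandwich (ri rj : 'M[R]_l) :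
  ri *m ri = - (4^-1)%:M -> mxbr ri (mxbr ri rj) = - rj ->
  (2%:R *: ri) *m (2%:R *: rj) *m (2%:R *: ri) = 2%:R *: rj.
Proof.
move=> sq; rewrite /mxbr mulmxBr mulmxBl !mulmxA sq -[rj *m ri *m ri]mulmxA sq.
rewrite mulNmx mulmxN mul_scalar_mx mul_mx_scalar => serre.
rewrite !scalemx_mul.
have -> : ri *m rj *m ri = 4^-1 *: rj.
  move: (ri *m rj *m ri) serre => S serre; apply/matrixP => a b.
  by have := congr1 (fun A : 'M[R]_l => A a b) serre; rewrite !mxE; lra.
by rewrite scalerA; congr (_ *: _); field.
Qed.

End Gamma.

Section JhatRelations.
Variables (R : numFieldType) (k l : nat) (G : 'M[R]_k).
Hypotheses (GT : G^T = G) (Gu : G \in unitmx).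
Variables (B : algType R) (iota : tensor R k l -> B).
Hypothesis iota_cliff : clifford_map G iota.

Lemma Jhat_commute x y (Gam Del : 'M[R]_l) :
  kform G x x = 2 -> kform G y y = 2 -> kform G x y = 0 ->
  Gam^T = - Gam -> Gam *m Del = Del *m Gam ->
  lbr (Jhat G iota x Gam) (Jhat G iota y Del) = 0.
Proof.
move=> hxx hyy hxy aGam comm.
have [[sXx pXx] sXy] := (Xt_sym_first GT x, Xt_sym_pairs GT x, Xt_sym_first GT y).
rewrite !Jhat_spin_quad (lbr_spin GT iota_cliff) //.
by rewrite comm (eq_spin_quad _ _ (contr_Xt_orth GT Gu hxx hyy hxy)) subrr.
Qed.

Lemma Jhat_serre x y (Gam Del : 'M[R]_l) :
  kform G x x = 2 -> kform G y y = 2 -> kform G x y = -1 ->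
  Gam^T = - Gam -> Gam *m Gam = - 1%:M -> Gam *m Del *m Gam = Del ->
  lbr (Jhat G iota x Gam) (lbr (Jhat G iota x Gam) (Jhat G iota y Del))
  = - Jhat G iota y Del.
Proof.
move=> hxx hyy hxy aGam sqGam sandwich; rewrite !Jhat_spin_quad.
have [[sXx pXx] sXy] := (Xt_sym_first GT x, Xt_sym_pairs GT x, Xt_sym_first GT y).
rewrite (lbr_spin GT iota_cliff) // lbrBr !lbrZr.
rewrite !(lbr_spin GT iota_cliff) //; try exact: contr_sym_first.
rewrite !mulmxA sandwich sqGam mulNmx mul1mx -mulmxA sqGam mulmxN mulmx1.
rewrite /spin_quad !cliff_quadZ !cliff_quadB !cliff_quadZ cliff_quadB cliff_quadN.
apply: eq_cliff_quad => p q; rewrite /spin_coef !mxE.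
rewrite -(contr_Xt_nested GT Gu hxx hyy hxy).
by ring.
Qed.

End JhatRelations.

Theorem proposition6p3 (R : realType) (n k l : nat) (A : 'M[int]_n)
    (G : 'M[R]_k) (sr : 'I_n -> 'rV[R]_k) (Rho : 'I_n -> 'M[R]_l) :
  simply_laced_GCM A ->
  (* real realization of A: h^* of dimension 2n - rank A, simple roots
     linearly independent; G = Gram matrix of the nondegenerate form *)
  k = (2 * n - \rank (map_mx (fun z : int => z%:~R : R) A))%N ->
  row_free (\matrix_(i < n) sr i) ->
  G^T = G -> G \in unitmx ->
  (forall i j, kform G (sr i) (sr j) = (A i j)%:~R) ->
  gen_spin_rep A Rho ->
  (forall al be, real_root G sr al -> real_root G sr be ->
     kform G al be = 0 ->
     forall a b c d,
       contr G (Xt G al) (Xt G be) a b c d - contr G (Xt G be) (Xt G al) a b c d = 0)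
  /\
  (forall al be, real_root G sr al -> real_root G sr be ->
     kform G al be = -1 ->
     forall a b c d,
       contr G (Xt G al) (Xt G be) a b c d + contr G (Xt G be) (Xt G al) a b c d
       = 2^-1 * Xt G (al + be) a b c d)
  /\
  (forall al be, real_root G sr al -> real_root G sr be ->
     kform G al be = 1 ->
     forall a b c d,
       contr G (Xt G al) (Xt G be) a b c d + contr G (Xt G be) (Xt G al) a b c d
       = 2^-1 * Xt G (al - be) a b c d)
  /\
  (forall (B : algType R) (iota : tensor R k l -> B),
     clifford_map G iota ->
     k_relations A (@lbr B) (fun i => Jhat G iota (sr i) (2%:R *: Rho i))).
Proof.
move=> [Adiag _] _ _ GT Gu hA [Rho_rel [Rho_sqr Rho_skew]].
have norm_simple i : kform G (sr i) (sr i) = 2 by rewrite hA Adiag.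
have norm_root := real_root_norm GT norm_simple.
split; [|split; [|split]].
- move=> al be /norm_root hal /norm_root hbe hab a b c d.
  by rewrite (contr_Xt_orth GT Gu hal hbe hab) subrr.
- by move=> al be /norm_root hal /norm_root hbe; exact: contr_Xt_sum.
- by move=> al be /norm_root hal /norm_root hbe; exact: contr_Xt_diff.
move=> B iota iota_cliff i j.
have Gam_skew : (2%:R *: Rho i)^T = - (2%:R *: Rho i).
  by rewrite linearZ /= Rho_skew scalerN.
have hij r : A i j = r -> kform G (sr i) (sr j) = r%:~R by rewrite hA => ->.
split=> [/[dup] /hij hsr /(Rho_rel i j).1 serre | /[dup] /hij hsr /(Rho_rel i j).2 comm].
- apply: Jhat_serre => //; [exact: gamma_sqr | exact: gamma_sandwich].
- apply: Jhat_commute => //.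
  rewrite !scalemx_mul; congr (_ *: _); apply/eqP; rewrite -subr_eq0; exact/eqP.
Qed.
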